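(* Fix $\epsilon>0$. Let $\psi$ be as in the context, and let $\eta>0$ be small enough that for $\lambda\in P(\epsilon,\eta)$ the cuts of $h_\lambda$ lie outside the closed unit disk. Then there is a constant $C$, depending only on $p,\epsilon,\psi,\eta$, such that for all $R>1$, all $\lambda\in P(\epsilon,\eta)$ and all $u\in\Gamma_R$, $$|g_\lambda(u)|\le C\,|\lambda|^{\frac{1}{4p^2}}\,|u|^{1+\frac{1}{2p}-\frac{1}{2p^2}}.$$
   Context: Fix an integer $p\ge2$. Let $T_p(z)$ be the Fuss–Catalan function: the unique solution of $zT^p-T+1=0$ analytic on $\mathbb C\setminus[(p-1)^{p-1}/p^p,\infty)$ with $T_p(0)=1$. Square roots are principal branches. For $\lambda\in\mathbb C$ set $f_\lambda(u)=\sqrt{T_p(-\lambda u^{2p-2})}$, $h_\lambda(u)=uf_\lambda(u)$ and $g_\lambda(u)=h_\lambda(u)-u$. For $\epsilon,\eta>0$ let $P(\epsilon,\eta)=\{\lambda\in\mathbb C:0<|\lambda|<\eta,\ |\arg\lambda|<\pi-\epsilon\}$. The function $h_\lambda$ is analytic away from cuts lying on the rays $\arg u=\frac{\pi-\arg\lambda}{2p-2}+\frac{k\pi}{p-1}$ ($k=-p+2,\dots,p-1$), at $|u|\ge|\lambda|^{-1/(2p-2)}(p-1)^{1/2}p^{-p/(2p-2)}$. Fix an angle $\psi\in(0,\pi/4)$, small enough (depending on $\epsilon,p$) that for every $\lambda$ with $|\arg\lambda|\le\pi-\epsilon$ these rays avoid the double sector $\{|\arg u|\le\psi\}\cup\{|\arg(-u)|\le\psi\}$.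 For $R>1$, the keyhole contour $\Gamma_R$ is the positively oriented boundary of $$D_R=\{|u|<R\}\cap\big(\{|u|<1\}\cup\{|\arg u|<\psi\}\cup\{|\arg(-u)|<\psi\}\big).$$ *)

From Stdlib Require Import Reals Lra ZArith.
Open Scope R_scope.

Record Cx := mkC { Re : R ; Im : R }.

Definition C0 : Cx := mkC 0 0.
Definition C1 : Cx := mkC 1 0.
Definition RtoC (x : R) : Cx := mkC x 0.
Definition Cadd (z w : Cx) : Cx := mkC (Re z + Re w) (Im z + Im w).
Definition Copp (z : Cx) : Cx := mkC (- Re z) (- Im z).
Definition Csub (z w : Cx) : Cx := Cadd z (Copp w).
Definition Cmul (z w : Cx) : Cx :=
  mkC (Re z * Re w - Im z * Im w) (Re z * Im w + Im z * Re w).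
Definition Cinv (z : Cx) : Cx :=
  let d := Re z * Re z + Im z * Im z in mkC (Re z / d) (- Im z / d).
Definition Cdiv (z w : Cx) : Cx := Cmul z (Cinv w).
Fixpoint Cpow (z : Cx) (n : nat) : Cx :=
  match n with O => C1 | S m => Cmul z (Cpow z m) end.
Definition Cnorm (z : Cx) : R := sqrt (Re z * Re z + Im z * Im z).
Definition Cexpi (theta : R) : Cx := mkC (cos theta) (sin theta).
Definition Cscale (t : R) (z : Cx) : Cx := mkC (t * Re z) (t * Im z).

(* Principal argument, with values in (-PI, PI]; Carg 0 = 0 (never used
   in an essential way). *)
Definition Carg (z : Cx) : R :=
  if Req_EM_T (Cnorm z) 0 then 0
  else if Rle_dec 0 (Im z) then acos (Re z / Cnorm z)
  else - acos (Re z / Cnorm z).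

(* Principal square root: the root with Re >= 0, and with Im >= 0 on the
   negative real axis (branch cut along (-oo,0)). *)
Definition Csqrt (z : Cx) : Cx :=
  mkC (sqrt ((Cnorm z + Re z) / 2))
      (if Rlt_dec (Im z) 0 then - sqrt ((Cnorm z - Re z) / 2)
       else sqrt ((Cnorm z - Re z) / 2)).

Definition Cdifferentiable_at (f : Cx -> Cx) (z : Cx) : Prop :=
  exists L : Cx, forall e, 0 < e -> exists d, 0 < d /\
    forall h, h <> C0 -> Cnorm h < d ->
      Cnorm (Csub (Cdiv (Csub (f (Cadd z h)) (f z)) h) L) < e.

(* The branch point (p-1)^(p-1)/p^p and the slit plane Cx \ [c, oo). *)
Definition fc_branch (p : nat) : R := (INR p - 1) ^ (p - 1) / INR p ^ p.
Definition in_slit_plane (p : nat) (z : Cx) : Prop :=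
  ~ (Im z = 0 /\ fc_branch p <= Re z).

Definition is_FussCatalan (p : nat) (T : Cx -> Cx) : Prop :=
  (forall z, in_slit_plane p z ->
     Cadd (Csub (Cmul z (Cpow (T z) p)) (T z)) C1 = C0) /\
  (forall z, in_slit_plane p z -> Cdifferentiable_at T z) /\
  T C0 = C1.

Definition f_lam (p : nat) (T : Cx -> Cx) (lam u : Cx) : Cx :=
  Csqrt (T (Copp (Cmul lam (Cpow u (2 * p - 2))))).
Definition h_lam (p : nat) (T : Cx -> Cx) (lam u : Cx) : Cx :=
  Cmul u (f_lam p T lam u).
Definition g_lam (p : nat) (T : Cx -> Cx) (lam u : Cx) : Cx :=
  Csub (h_lam p T lam u) u.

Definition inP (eps eta : R) (lam : Cx) : Prop :=
  0 < Cnorm lam < eta /\ Rabs (Carg lam) < PI - eps.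

(* Radius beyond which the cuts of h_lambda lie:
   |lam|^(-1/(2p-2)) (p-1)^(1/2) p^(-p/(2p-2)). *)
Definition cut_radius (p : nat) (lam : Cx) : R :=
  Rpower (Cnorm lam) (- (1 / (2 * INR p - 2)))
  * Rpower (INR p - 1) (1 / 2)
  * Rpower (INR p) (- (INR p / (2 * INR p - 2))).

Definition in_double_sector (psi : R) (u : Cx) : Prop :=
  Rabs (Carg u) <= psi \/ Rabs (Carg (Copp u)) <= psi.

Definition psi_admissible (p : nat) (eps psi : R) : Prop :=
  forall lam : Cx, lam <> C0 -> Rabs (Carg lam) <= PI - eps ->
  forall k : Z, (- Z.of_nat p + 2 <= k <= Z.of_nat p - 1)%Z ->
  forall t : R, 0 < t ->
    ~ in_double_sector psi
        (Cscale t (Cexpi ((PI - Carg lam) / (2 * INR p - 2)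
                          + IZR k * PI / (INR p - 1)))).

Definition in_D (psi Rr : R) (u : Cx) : Prop :=
  Cnorm u < Rr /\
  (Cnorm u < 1 \/ Rabs (Carg u) < psi \/ Rabs (Carg (Copp u)) < psi).

(* u lies on Gamma_R = boundary of D_R (D_R is open, so boundary =
   closure minus D_R). *)
Definition on_Gamma (psi Rr : R) (u : Cx) : Prop :=
  (forall d, 0 < d -> exists v, in_D psi Rr v /\ Cnorm (Csub v u) < d) /\
  ~ in_D psi Rr u.

(** With z = -lam u^(2p-2) we have g_lam(u) = u (sqrt (T z) - 1), and since the
    principal root has nonnegative real part, |sqrt w - 1| <= |w - 1|.  So it is
    enough to bound |T z - 1| <= C |z|^a with a = 1/(4p^2): for small z this
    follows from differentiability of T at 0, and for |z| bounded below from the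
    equation z T^p = T - 1, which forces |T z| <= 1 + 2/|z|.  Then
    |z|^a = |lam|^a |u|^((2p-2)a) and 1 + (2p-2)a is the stated exponent.
    The geometric input is that z avoids the cut [c, oo): for |u| <= 1 because
    |z| <= |lam| < c, which is what cut_radius > 1 means, and for |u| > 1
    because such points of Gamma_R lie in the closed double sector, where
    admissibility of psi forbids z to be a positive real. *)

From Pilot Require Import Defs.
From Stdlib Require Import Reals Lra Lia ZArith.
Open Scope R_scope.

Lemma Cnorm_ge0 z : 0 <= Cnorm z.
Proof. apply sqrt_pos. Qed.

Lemma Cnorm_sq z : Cnorm z * Cnorm z = Re z * Re z + Im z * Im z.
Proof. apply sqrt_sqrt; nra. Qed.

Lemma Cnorm_mul a b : Cnorm (Cmul a b) = Cnorm a * Cnorm b.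
Proof.
  destruct a as [x y], b as [u v]; unfold Cnorm; simpl.
  rewrite <- sqrt_mult by nra. f_equal; ring.
Qed.

Lemma Cnorm_opp a : Cnorm (Copp a) = Cnorm a.
Proof. destruct a; unfold Cnorm; simpl; f_equal; ring. Qed.

Lemma Cnorm_C1 : Cnorm Defs.C1 = 1.
Proof. unfold Cnorm; simpl. replace (1 * 1 + 0 * 0) with 1 by ring. apply sqrt_1. Qed.

Lemma Cnorm_pow z n : Cnorm (Cpow z n) = Cnorm z ^ n.
Proof. induction n as [|n IH]; simpl; [apply Cnorm_C1|]. rewrite Cnorm_mul, IH; ring. Qed.

Lemma Cnorm_triangle a b : Cnorm (Cadd a b) <= Cnorm a + Cnorm b.
Proof.
  destruct a as [x y], b as [u v]; unfold Cnorm; simpl.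
  pose proof (sqrt_cauchy x y u v) as Hcs; unfold Rsqr in Hcs.
  pose proof (sqrt_pos (x * x + y * y)); pose proof (sqrt_pos (u * u + v * v)).
  pose proof (sqrt_sqrt (x * x + y * y) ltac:(nra)).
  pose proof (sqrt_sqrt (u * u + v * v) ltac:(nra)).
  rewrite <- (sqrt_Rsqr (sqrt (x * x + y * y) + sqrt (u * u + v * v))) by lra.
  apply sqrt_le_1_alt; unfold Rsqr; nra.
Qed.

Lemma Cnorm_sub_ge a b : Cnorm b - Cnorm a <= Cnorm (Csub a b).
Proof.
  pose proof (Cnorm_triangle a (Copp (Csub a b))) as Htri.
  rewrite Cnorm_opp in Htri.
  replace (Cadd a (Copp (Csub a b))) with b in Htri
    by (destruct a, b; unfold Cadd, Csub, Copp; simpl; f_equal; ring).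
  lra.
Qed.

Lemma Cnorm_sub1_le z : Cnorm (Csub z Defs.C1) <= Cnorm z + 1.
Proof.
  pose proof (Cnorm_triangle z (Copp Defs.C1)) as Htri.
  rewrite Cnorm_opp, Cnorm_C1 in Htri. exact Htri.
Qed.

Lemma Re_bound_Cnorm z : - Cnorm z <= Re z <= Cnorm z.
Proof. pose proof (Cnorm_sq z); pose proof (Cnorm_ge0 z); split; nra. Qed.

Lemma Cnorm_gt0_neq0 z : 0 < Cnorm z -> z <> Defs.C0.
Proof.
  intros Hz ->; unfold Cnorm in Hz; simpl in Hz.
  replace (0 * 0 + 0 * 0) with 0 in Hz by ring. rewrite sqrt_0 in Hz; lra.
Qed.

Lemma Cnorm_inv z : 0 < Cnorm z -> Cnorm (Cinv z) = / Cnorm z.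
Proof.
  intro Hz. pose proof (Cnorm_sq z) as Hsq.
  destruct z as [x y]; simpl in Hsq; set (N := Cnorm (mkC x y)) in *.
  unfold Cnorm at 1; simpl.
  replace (x / (x * x + y * y) * (x / (x * x + y * y))
           + - y / (x * x + y * y) * (- y / (x * x + y * y))) with (/ N * / N).
  - apply sqrt_square; left; apply Rinv_0_lt_compat; lra.
  - assert (Hd : x * x + y * y <> 0) by nra.
    transitivity ((x * x + y * y) / ((x * x + y * y) * (x * x + y * y)));
      [rewrite <- Hsq; field; lra | field; exact Hd].
Qed.

(* With a := Re (sqrt w) >= 0, the gap |w - 1|^2 - |sqrt w - 1|^2 factors as
   (|w| + 2a)(|w| + 1 - 2a), and 4a^2 = 2(|w| + Re w) <= (|w| + 1)^2. *)
Lemma Csqrt_sub1_le w : Cnorm (Csub (Csqrt w) Defs.C1) <= Cnorm (Csub w Defs.C1).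
Proof.
  pose proof (Re_bound_Cnorm w); pose proof (Cnorm_sq w); pose proof (Cnorm_ge0 w).
  set (N := Cnorm w) in *.
  assert (Ha2 : Re (Csqrt w) * Re (Csqrt w) = (N + Re w) / 2)
    by (apply sqrt_sqrt; lra).
  assert (Hb2 : Im (Csqrt w) * Im (Csqrt w) = (N - Re w) / 2).
  { unfold Csqrt; simpl; fold N.
    destruct (Rlt_dec (Im w) 0); rewrite ?Rmult_opp_opp; apply sqrt_sqrt; lra. }
  assert (Ha0 : 0 <= Re (Csqrt w)) by apply sqrt_pos.
  set (a := Re (Csqrt w)) in *; set (b := Im (Csqrt w)) in *.
  assert (Ha : 2 * a <= N + 1) by (pose proof (Rle_0_sqr (N - 1)); unfold Rsqr in *; nra).
  unfold Cnorm, Csub, Cadd, Copp, Defs.C1; cbn [Re Im]; fold a b.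
  apply sqrt_le_1_alt.
  assert (0 <= (N + 2 * a) * (N + 1 - 2 * a)) by (apply Rmult_le_pos; lra).
  nra.
Qed.

Lemma Cdifferentiable_at_increment_le f z : Cdifferentiable_at f z ->
  exists d K, 0 < d /\ forall h, 0 < Cnorm h < d ->
    Cnorm (Csub (f (Cadd z h)) (f z)) <= K * Cnorm h.
Proof.
  intros [L HL]. destruct (HL 1 Rlt_0_1) as [d [Hd Hquot]].
  exists d, (Cnorm L + 1). split; [exact Hd|]. intros h [Hh0 Hhd].
  specialize (Hquot h (Cnorm_gt0_neq0 h Hh0) Hhd).
  set (Q := Cdiv (Csub (f (Cadd z h)) (f z)) h) in Hquot.
  assert (HQ : Cnorm Q <= Cnorm L + 1).
  { pose proof (Cnorm_triangle (Csub Q L) L) as Htri.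
    replace (Cadd (Csub Q L) L) with Q in Htri
      by (destruct Q, L; unfold Cadd, Csub, Copp; simpl; f_equal; ring).
    lra. }
  unfold Q, Cdiv in HQ. rewrite Cnorm_mul, Cnorm_inv in HQ by exact Hh0.
  apply (Rmult_le_compat_r (Cnorm h)) in HQ; [|lra].
  rewrite Rmult_assoc, Rinv_l in HQ by lra. lra.
Qed.

Lemma Rpower_ge_self x a : 0 < x < 1 -> 0 < a <= 1 -> x <= Rpower x a.
Proof.
  intros Hx Ha. unfold Rpower.
  assert (ln x < 0) by (rewrite <- ln_1; apply ln_increasing; lra).
  rewrite <- (exp_ln x) at 1 by lra.
  destruct (Req_dec a 1) as [->|Ha1]; [rewrite Rmult_1_l; lra|].
  left; apply exp_increasing; nra.
Qed.

Lemma fc_branch_pos p : (2 <= p)%nat -> 0 < fc_branch p.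
Proof.
  intro Hp. assert (1 < INR p) by (apply (lt_INR 1); lia).
  apply Rdiv_lt_0_compat; apply pow_lt; lra.
Qed.

Section FussCatalan.

Variables (p : nat) (T : Cx -> Cx).
Hypotheses (Hp : (2 <= p)%nat) (HT : is_FussCatalan p T).

Lemma FussCatalan_sub1_near0 : exists d K, 0 < d /\ forall h, 0 < Cnorm h < d ->
  Cnorm (Csub (T h) Defs.C1) <= K * Cnorm h.
Proof.
  destruct HT as [_ [Hdiff HT0]].
  assert (Hslit0 : in_slit_plane p Defs.C0).
  { intros [_ Hc]. pose proof (fc_branch_pos p Hp). simpl in Hc. lra. }
  destruct (Cdifferentiable_at_increment_le T Defs.C0 (Hdiff _ Hslit0))
    as (d & K & Hd & Hinc).
  exists d, K. split; [exact Hd|]. intros h Hh.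
  specialize (Hinc h Hh). rewrite HT0 in Hinc.
  replace (Cadd Defs.C0 h) with h in Hinc
    by (destruct h; unfold Cadd; simpl; f_equal; ring).
  exact Hinc.
Qed.

Lemma FussCatalan_eq z : in_slit_plane p z ->
  Cmul z (Cpow (T z) p) = Csub (T z) Defs.C1.
Proof.
  intro Hz. destruct HT as [Heq _]. specialize (Heq z Hz).
  destruct (Cmul z (Cpow (T z) p)) as [a b], (T z) as [u v].
  unfold Csub, Cadd, Copp, Defs.C1, Defs.C0 in *; simpl in *.
  injection Heq as Hre Him. f_equal; lra.
Qed.

(* If |T z| > 1 then |z| |T z|^2 <= |z| |T z|^p = |T z - 1| < 2 |T z|. *)
Lemma FussCatalan_Cnorm_le z : in_slit_plane p z -> 0 < Cnorm z ->
  Cnorm (T z) <= 1 + 2 / Cnorm z.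
Proof.
  intros Hz Hz0.
  pose proof (f_equal Cnorm (FussCatalan_eq z Hz)) as E.
  rewrite Cnorm_mul, Cnorm_pow in E.
  pose proof (Cnorm_sub1_le (T z)) as Htri.
  set (t := Cnorm (T z)) in *.
  assert (H2z : 0 < 2 / Cnorm z) by (apply Rdiv_lt_0_compat; lra).
  destruct (Rle_lt_dec t 1) as [|Ht]; [lra|].
  assert (Hpow : t * t <= t ^ p).
  { replace p with (2 + (p - 2))%nat by lia. rewrite pow_add.
    pose proof (pow_R1_Rle t (p - 2) ltac:(lra)). simpl; nra. }
  assert (Cnorm z * (t * t) < 2 * t)
    by (apply (Rmult_le_compat_l (Cnorm z)) in Hpow; lra).
  assert (Hzt : Cnorm z * t < 2) by nra.
  assert (t < 2 / Cnorm z).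
  { apply (Rmult_lt_reg_l (Cnorm z)); [lra|]. field_simplify; lra. }
  lra.
Qed.

(* Near 0, K |z| <= K |z|^a; for |z| >= d0, |T z - 1| <= 2 + 2/d0 <= (2 + 2/d0) (|z|/d0)^a. *)
Lemma FussCatalan_sub1_le_Rpower a : 0 < a <= 1 ->
  exists C, forall z, in_slit_plane p z -> 0 < Cnorm z ->
    Cnorm (Csub (T z) Defs.C1) <= C * Rpower (Cnorm z) a.
Proof.
  intro Ha.
  destruct FussCatalan_sub1_near0 as (d & K & Hd & Hnear).
  set (d0 := Rmin d 1).
  assert (Hd0 : 0 < d0) by (apply Rmin_pos; lra).
  assert (Hd0d : d0 <= d) by apply Rmin_l.
  assert (Hd01 : d0 <= 1) by apply Rmin_r.
  set (B := 2 + 2 / d0).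
  assert (Hd0a : 0 < Rpower d0 a) by apply exp_pos.
  exists (Rabs K + B / Rpower d0 a). intros z Hz Hz0.
  assert (Hza : 0 < Rpower (Cnorm z) a) by apply exp_pos.
  assert (HB : 0 < B / Rpower d0 a)
    by (apply Rdiv_lt_0_compat; [unfold B; pose proof (Rinv_0_lt_compat d0 Hd0)|]; lra).
  destruct (Rlt_le_dec (Cnorm z) d0) as [Hsmall|Hlarge].
  - pose proof (Hnear z ltac:(lra)).
    pose proof (Rpower_ge_self (Cnorm z) a ltac:(lra) Ha).
    pose proof (Rle_abs K). pose proof (Rabs_pos K). nra.
  - pose proof (FussCatalan_Cnorm_le z Hz Hz0) as Hfar.
    pose proof (Cnorm_sub1_le (T z)) as Htri.
    assert (2 / Cnorm z <= 2 / d0)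
      by (apply Rmult_le_compat_l; [lra|]; apply Rinv_le_contravar; lra).
    assert (Rpower d0 a <= Rpower (Cnorm z) a) by (apply Rle_Rpower_l; lra).
    assert (B <= B / Rpower d0 a * Rpower (Cnorm z) a).
    { unfold Rdiv. rewrite Rmult_assoc, <- (Rmult_1_r B) at 1.
      apply Rmult_le_compat_l; [unfold B; pose proof (Rinv_0_lt_compat d0 Hd0); lra|].
      apply (Rmult_le_reg_l (Rpower d0 a)); [exact Hd0a|].
      rewrite <- Rmult_assoc, Rinv_r by lra. lra. }
    pose proof (Rabs_pos K). unfold B in *. nra.
Qed.

End FussCatalan.

Lemma cos_sin_periodZ x k :
  cos (x + 2 * IZR k * PI) = cos x /\ sin (x + 2 * IZR k * PI) = sin x.
Proof.
  destruct (Z_le_gt_dec 0 k) as [Hk|Hk].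
  - rewrite <- (Z2Nat.id k), <- INR_IZR_INZ by lia.
    split; [apply cos_period|apply sin_period].
  - set (n := Z.to_nat (- k)).
    assert (E : IZR k = - INR n)
      by (unfold n; rewrite INR_IZR_INZ, Z2Nat.id, opp_IZR by lia; ring).
    rewrite E. replace x with ((x + 2 * - INR n * PI) + 2 * INR n * PI) at 2 4 by ring.
    rewrite cos_period, sin_period. split; reflexivity.
Qed.

Lemma Re_div_Cnorm_bound v : 0 < Cnorm v -> -1 <= Re v / Cnorm v <= 1.
Proof.
  intro Hv. pose proof (Re_bound_Cnorm v).
  split; apply (Rmult_le_reg_l (Cnorm v)); auto; field_simplify; lra.
Qed.

Lemma Rabs_Carg v : 0 < Cnorm v -> Rabs (Carg v) = acos (Re v / Cnorm v).
Proof.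
  intro Hv. unfold Carg. destruct (Req_EM_T (Cnorm v) 0); [lra|].
  pose proof (acos_bound (Re v / Cnorm v)).
  destruct (Rle_dec 0 (Im v)); rewrite ?Rabs_Ropp; apply Rabs_right; lra.
Qed.

Lemma Cpolar z : 0 < Cnorm z ->
  Re z = Cnorm z * cos (Carg z) /\ Im z = Cnorm z * sin (Carg z).
Proof.
  intro Hz. pose proof (Cnorm_sq z) as Hsq. pose proof (Re_div_Cnorm_bound z Hz).
  set (N := Cnorm z) in *.
  assert (Hsin : sqrt (1 - (Re z / N)²) = Rabs (Im z) / N).
  { rewrite <- (sqrt_Rsqr (Rabs (Im z) / N)).
    - f_equal. unfold Rsqr.
      replace (Rabs (Im z) / N * (Rabs (Im z) / N)) with (Rabs (Im z * Im z) / (N * N))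
        by (rewrite Rabs_mult; field; lra).
      rewrite Rabs_right by nra.
      replace (Im z * Im z) with (N * N - Re z * Re z) by lra. field; lra.
    - apply Rmult_le_pos; [apply Rabs_pos|left; apply Rinv_0_lt_compat; lra]. }
  unfold Carg. fold N. destruct (Req_EM_T N 0) as [E|_]; [lra|].
  destruct (Rle_dec 0 (Im z)).
  - rewrite cos_acos, sin_acos, Hsin, Rabs_right by lra. split; field; lra.
  - rewrite cos_neg, sin_neg, cos_acos, sin_acos, Hsin, Rabs_left by lra.
    split; field; lra.
Qed.

Lemma Cpow_polar z r phi n : Re z = r * cos phi -> Im z = r * sin phi ->
  Re (Cpow z n) = r ^ n * cos (INR n * phi) /\
  Im (Cpow z n) = r ^ n * sin (INR n * phi).
Proof.
  intros Hre Him. induction n as [|n [IHre IHim]].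
  - simpl. rewrite Rmult_0_l, cos_0, sin_0. split; ring.
  - cbn [Cpow Cmul Re Im]. rewrite IHre, IHim, Hre, Him, S_INR.
    replace ((INR n + 1) * phi) with (phi + INR n * phi) by ring.
    rewrite cos_plus, sin_plus. simpl. split; ring.
Qed.

Lemma Rabs_Carg_lt_Re_ge v psi : 0 < psi <= PI -> Rabs (Carg v) < psi ->
  cos psi * Cnorm v <= Re v.
Proof.
  intros Hpsi Hv. destruct (Cnorm_ge0 v) as [Hv0|Hv0].
  - rewrite Rabs_Carg in Hv by exact Hv0.
    pose proof (acos_bound (Re v / Cnorm v)).
    pose proof (cos_decreasing_1 (acos (Re v / Cnorm v)) psi
                  ltac:(lra) ltac:(lra) ltac:(lra) ltac:(lra) Hv) as Hc.
    rewrite cos_acos in Hc by (apply Re_div_Cnorm_bound; exact Hv0).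
    apply (Rmult_lt_compat_r (Cnorm v)) in Hc; [|exact Hv0].
    replace (Re v / Cnorm v * Cnorm v) with (Re v) in Hc by (field; lra). lra.
  - pose proof (Re_bound_Cnorm v). rewrite <- Hv0 in *.
    replace (Re v) with 0 by lra. lra.
Qed.

Lemma Re_ge_Rabs_Carg_le u psi : 0 < Cnorm u -> 0 < psi <= PI ->
  cos psi * Cnorm u <= Re u -> Rabs (Carg u) <= psi.
Proof.
  intros Hu Hpsi Hre. rewrite Rabs_Carg by exact Hu.
  pose proof (acos_bound (Re u / Cnorm u)).
  destruct (Rle_lt_dec (acos (Re u / Cnorm u)) psi) as [|Hlt]; [assumption|].
  pose proof (cos_decreasing_1 psi (acos (Re u / Cnorm u))
                ltac:(lra) ltac:(lra) ltac:(lra) ltac:(lra) Hlt) as Hc.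
  rewrite cos_acos in Hc by (apply Re_div_Cnorm_bound; exact Hu).
  apply (Rmult_lt_compat_r (Cnorm u)) in Hc; [|exact Hu].
  replace (Re u / Cnorm u * Cnorm u) with (Re u) in Hc by (field; lra). lra.
Qed.

Lemma Gamma_Cnorm_pos psi Rr u : 1 < Rr -> on_Gamma psi Rr u -> 0 < Cnorm u.
Proof.
  intros HR [_ HnD]. destruct (Cnorm_ge0 u) as [|E]; [assumption|].
  exfalso; apply HnD. split; [lra|left; lra].
Qed.

(* A point of Gamma_R outside the unit disk is a limit of points of D_R with
   modulus > 1; those lie in the open double sector, whose closure is cut out
   by cos psi |v| <= |Re v|. *)
Lemma Gamma_in_double_sector psi Rr u : 0 < psi <= PI / 2 ->
  on_Gamma psi Rr u -> 1 < Cnorm u -> in_double_sector psi u.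
Proof.
  intros Hpsi [Hcl _] Hu1.
  assert (Hcos : 0 <= cos psi) by (apply cos_ge_0; lra).
  assert (Hu0 : 0 < Cnorm u) by lra.
  unfold in_double_sector.
  destruct (Rle_lt_dec (cos psi * Cnorm u) (Re u)) as [Hr|Hr].
  { left; apply Re_ge_Rabs_Carg_le; auto; lra. }
  destruct (Rle_lt_dec (cos psi * Cnorm u) (- Re u)) as [Hl|Hl].
  { right; apply Re_ge_Rabs_Carg_le; rewrite ?Cnorm_opp; auto; lra. }
  exfalso.
  set (d := Rmin (Cnorm u - 1)
                 (Rmin ((cos psi * Cnorm u - Re u) / 2) ((cos psi * Cnorm u + Re u) / 2))).
  assert (Hd : 0 < d) by (unfold d; repeat apply Rmin_pos; lra).
  assert (Hd1 : d <= Cnorm u - 1) by apply Rmin_l.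
  assert (Hd2 : d <= (cos psi * Cnorm u - Re u) / 2)
    by (eapply Rle_trans; [apply Rmin_r|apply Rmin_l]).
  assert (Hd3 : d <= (cos psi * Cnorm u + Re u) / 2)
    by (eapply Rle_trans; [apply Rmin_r|apply Rmin_r]).
  destruct (Hcl d Hd) as [v [[_ HvD] Hvu]].
  assert (Hmod : cos psi * (Cnorm u - Cnorm v) <= Cnorm (Csub v u)).
  { pose proof (Cnorm_sub_ge v u); pose proof (Cnorm_ge0 (Csub v u)).
    pose proof (COS_bound psi). nra. }
  pose proof (Re_bound_Cnorm (Csub v u)) as Hre; cbn [Csub Cadd Copp Re] in Hre.
  destruct HvD as [Hv|[Hv|Hv]].
  - pose proof (Cnorm_sub_ge v u). lra.
  - pose proof (Rabs_Carg_lt_Re_ge v psi ltac:(lra) Hv). lra.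
  - pose proof (Rabs_Carg_lt_Re_ge (Copp v) psi ltac:(lra) Hv) as Hopp.
    rewrite Cnorm_opp in Hopp. cbn [Copp Re] in Hopp. lra.
Qed.

Lemma INR_2p_2 p : (1 <= p)%nat -> INR (2 * p - 2) = 2 * INR p - 2.
Proof. intro Hp. rewrite minus_INR, mult_INR by lia. simpl. ring. Qed.

(* alpha + (2p-2) phi = (2 k0 + 1) PI; reducing k0 modulo 2p - 2 into the
   window [-p+2, p-1] only changes phi by a multiple of 2 PI. *)
Lemma cut_ray_angle p alpha phi : (2 <= p)%nat ->
  sin (alpha + (2 * INR p - 2) * phi) = 0 ->
  cos (alpha + (2 * INR p - 2) * phi) < 0 ->
  exists k : Z, (- Z.of_nat p + 2 <= k <= Z.of_nat p - 1)%Z /\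
    cos ((PI - alpha) / (2 * INR p - 2) + IZR k * PI / (INR p - 1)) = cos phi /\
    sin ((PI - alpha) / (2 * INR p - 2) + IZR k * PI / (INR p - 1)) = sin phi.
Proof.
  intros Hp Hs Hc.
  assert (HP : 1 < INR p) by (apply (lt_INR 1); lia).
  destruct (sin_eq_0_0 _ Hs) as [k0 Hk0].
  pose proof (Z.div_mod k0 2 ltac:(lia)) as Dk.
  pose proof (Z.mod_pos_bound k0 2 ltac:(lia)).
  set (m := (k0 / 2)%Z) in *.
  destruct (Z.eq_dec (k0 mod 2) 0) as [Heven|Hodd].
  - exfalso. rewrite Hk0, Dk, Heven in Hc.
    replace (IZR (2 * m + 0) * PI) with (0 + 2 * IZR m * PI) in Hc
      by (rewrite plus_IZR, mult_IZR; simpl; ring).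
    rewrite (proj1 (cos_sin_periodZ 0 m)), cos_0 in Hc. lra.
  - assert (Ek0 : IZR k0 = 2 * IZR m + 1)
      by (rewrite Dk; replace (k0 mod 2)%Z with 1%Z by lia;
          rewrite plus_IZR, mult_IZR; simpl; ring).
    set (Nz := (2 * Z.of_nat p - 2)%Z).
    assert (HNz : (0 < Nz)%Z) by (unfold Nz; lia).
    pose proof (Z.div_mod (m + Z.of_nat p - 2) Nz ltac:(lia)) as Dm.
    pose proof (Z.mod_pos_bound (m + Z.of_nat p - 2) Nz HNz).
    set (q := ((m + Z.of_nat p - 2) / Nz)%Z) in *.
    set (r := ((m + Z.of_nat p - 2) mod Nz)%Z) in *.
    exists (r - (Z.of_nat p - 2))%Z. split; [unfold Nz in *; lia|].
    assert (Ek : IZR (r - (Z.of_nat p - 2)) = IZR m - (2 * INR p - 2) * IZR q).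
    { replace (r - (Z.of_nat p - 2))%Z with (m - Nz * q)%Z by lia.
      unfold Nz. rewrite minus_IZR, mult_IZR, minus_IZR, mult_IZR, <- INR_IZR_INZ.
      simpl. ring. }
    replace ((PI - alpha) / (2 * INR p - 2) + IZR (r - (Z.of_nat p - 2)) * PI / (INR p - 1))
      with (phi + 2 * IZR (- q) * PI).
    + apply cos_sin_periodZ.
    + assert (Ephi : phi = (IZR k0 * PI - alpha) / (2 * INR p - 2))
        by (rewrite <- Hk0; field; lra).
      rewrite Ek, Ephi, Ek0, opp_IZR. field. lra.
Qed.

(* Taking logarithms, 1 < cut_radius p lam says exactly |lam| < fc_branch p. *)
Lemma cut_radius_gt1_lt_branch p lam : (2 <= p)%nat -> 0 < Cnorm lam ->
  1 < cut_radius p lam -> Cnorm lam < fc_branch p.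
Proof.
  intros Hp Hlam Hcut.
  assert (HP : 1 < INR p) by (apply (lt_INR 1); lia).
  unfold cut_radius, Rpower in Hcut. rewrite <- !exp_plus in Hcut.
  apply ln_increasing in Hcut; [|lra]. rewrite ln_1, ln_exp in Hcut.
  apply ln_lt_inv; [exact Hlam|apply fc_branch_pos, Hp|].
  unfold fc_branch, Rdiv.
  rewrite ln_mult, ln_Rinv, !ln_pow, minus_INR
    by (try apply Rinv_0_lt_compat; try apply pow_lt; lia || lra).
  simpl.
  set (L := ln (Cnorm lam)) in *.
  assert (E : (2 * INR p - 2) * (- (1 / (2 * INR p - 2)) * L + 1 / 2 * ln (INR p - 1)
                + - (INR p / (2 * INR p - 2)) * ln (INR p))
              = - L + (INR p - 1) * ln (INR p - 1) - INR p * ln (INR p))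
    by (field; lra).
  assert (0 < (2 * INR p - 2) * (- (1 / (2 * INR p - 2)) * L + 1 / 2 * ln (INR p - 1)
                + - (INR p / (2 * INR p - 2)) * ln (INR p)))
    by (apply Rmult_lt_0_compat; lra).
  lra.
Qed.

(* If -lam u^(2p-2) were a positive real, then arg lam + (2p-2) arg u would be
   an odd multiple of PI, i.e. u would lie on one of the rays carrying the cuts,
   which admissibility of psi keeps out of the double sector. *)
Lemma double_sector_in_slit_plane p eps psi lam u : (2 <= p)%nat ->
  psi_admissible p eps psi -> 0 < Cnorm lam -> Rabs (Carg lam) <= PI - eps ->
  0 < Cnorm u -> in_double_sector psi u ->
  in_slit_plane p (Copp (Cmul lam (Cpow u (2 * p - 2)))).
Proof.
  intros Hp Had Hlam Harg Hu Hds [Him Hre].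
  pose proof (fc_branch_pos p Hp).
  destruct (Cpolar u Hu) as [Pu1 Pu2], (Cpolar lam Hlam) as [Pl1 Pl2].
  set (rho := Cnorm u) in *; set (phi := Carg u) in *.
  set (r := Cnorm lam) in *; set (alpha := Carg lam) in *.
  destruct (Cpow_polar u rho phi (2 * p - 2) Pu1 Pu2) as [Q1 Q2].
  rewrite INR_2p_2 in Q1, Q2 by lia.
  cbn [Copp Cmul Re Im] in Him, Hre. rewrite Q1, Q2, Pl1, Pl2 in Him, Hre.
  set (n := 2 * INR p - 2) in *.
  assert (Hrn : 0 < r * rho ^ (2 * p - 2))
    by (apply Rmult_lt_0_compat; [lra|apply pow_lt; lra]).
  assert (Hsin : sin (alpha + n * phi) = 0).
  { rewrite sin_plus. apply (Rmult_eq_reg_l (- (r * rho ^ (2 * p - 2)))); [|lra].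
    rewrite Rmult_0_r, <- Him. ring. }
  assert (Hcos : cos (alpha + n * phi) < 0).
  { rewrite cos_plus. apply (Rmult_lt_reg_l (r * rho ^ (2 * p - 2))); [lra|].
    rewrite Rmult_0_r. nra. }
  destruct (cut_ray_angle p alpha phi Hp Hsin Hcos) as [k [Hk [Ec Es]]].
  apply (Had lam (Cnorm_gt0_neq0 lam Hlam) Harg k Hk rho Hu). fold alpha.
  replace (Cscale rho (Cexpi ((PI - alpha) / (2 * INR p - 2)
                               + IZR k * PI / (INR p - 1)))) with u; [exact Hds|].
  unfold Cscale, Cexpi; cbn [Re Im]. rewrite Ec, Es, <- Pu1, <- Pu2.
  destruct u; reflexivity.
Qed.

Lemma Gamma_in_slit_plane p eps psi eta lam u Rr : (2 <= p)%nat ->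
  0 < psi <= PI / 2 -> psi_admissible p eps psi -> inP eps eta lam ->
  1 < cut_radius p lam -> 1 < Rr -> on_Gamma psi Rr u ->
  in_slit_plane p (Copp (Cmul lam (Cpow u (2 * p - 2)))).
Proof.
  intros Hp Hpsi Had [[Hlam _] Harg] Hcut HR HG.
  pose proof (Gamma_Cnorm_pos psi Rr u HR HG) as Hu.
  destruct (Rle_lt_dec (Cnorm u) 1) as [Hu1|Hu1].
  - intros [_ Hre].
    pose proof (cut_radius_gt1_lt_branch p lam Hp Hlam Hcut).
    set (z := Copp (Cmul lam (Cpow u (2 * p - 2)))) in *.
    assert (Hz : Cnorm z <= Cnorm lam).
    { unfold z. rewrite Cnorm_opp, Cnorm_mul, Cnorm_pow.
      assert (Cnorm u ^ (2 * p - 2) <= 1)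
        by (rewrite <- (pow1 (2 * p - 2)); apply pow_incr; lra).
      pose proof (pow_le (Cnorm u) (2 * p - 2) ltac:(lra)). nra. }
    pose proof (Re_bound_Cnorm z). lra.
  - apply (double_sector_in_slit_plane p eps psi);
      [exact Hp|exact Had|exact Hlam|lra|exact Hu|].
    apply (Gamma_in_double_sector psi Rr u); [exact Hpsi|exact HG|exact Hu1].
Qed.

Lemma Cnorm_g_lam p T lam u :
  Cnorm (g_lam p T lam u) = Cnorm u * Cnorm (Csub (f_lam p T lam u) Defs.C1).
Proof.
  rewrite <- Cnorm_mul. unfold g_lam, h_lam. f_equal.
  destruct u, (f_lam p T lam _); unfold Cmul, Csub, Cadd, Copp, Defs.C1; simpl.
  f_equal; ring.
Qed.

Lemma Rpower_mul_pow x y n a : 0 < x -> 0 < y ->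
  Rpower (x * y ^ n) a = Rpower x a * Rpower y (INR n * a).
Proof.
  intros Hx Hy.
  rewrite <- Rpower_mult_distr, <- Rpower_pow, Rpower_mult by (try apply pow_lt; lra).
  reflexivity.
Qed.

Theorem mainTheorem2 :
  forall (p : nat) (eps psi eta : R),
    (2 <= p)%nat -> 0 < eps ->
    0 < psi < PI / 4 -> psi_admissible p eps psi ->
    0 < eta ->
    (forall lam, inP eps eta lam -> 1 < cut_radius p lam) ->
    forall T : Cx -> Cx, is_FussCatalan p T ->
    exists Cst : R,
      forall (Rr : R), 1 < Rr ->
      forall lam : Cx, inP eps eta lam ->
      forall u : Cx, on_Gamma psi Rr u ->
        Cnorm (g_lam p T lam u)
        <= Cst * Rpower (Cnorm lam) (1 / (4 * INR p ^ 2))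
               * Rpower (Cnorm u) (1 + 1 / (2 * INR p) - 1 / (2 * INR p ^ 2)).
Proof.
  intros p eps psi eta Hp _ Hpsi Had _ Hcut T HT.
  assert (HP : 2 <= INR p) by (apply (le_INR 2); lia).
  set (a := 1 / (4 * INR p ^ 2)).
  assert (Ha : 0 < a <= 1).
  { unfold a, Rdiv. rewrite Rmult_1_l.
    split; [apply Rinv_0_lt_compat | rewrite <- Rinv_1; apply Rinv_le_contravar];
      simpl; nra. }
  destruct (FussCatalan_sub1_le_Rpower p T Hp HT a Ha) as [C HC].
  exists C. intros Rr HR lam Hlam u Hu.
  pose proof (Gamma_in_slit_plane p eps psi eta lam u Rr Hp ltac:(lra) Had Hlam
                (Hcut lam Hlam) HR Hu) as Hslit.
  pose proof (Gamma_Cnorm_pos psi Rr u HR Hu) as Hu0.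
  destruct Hlam as [[Hlam0 _] _].
  assert (Hz : Cnorm (Copp (Cmul lam (Cpow u (2 * p - 2))))
               = Cnorm lam * Cnorm u ^ (2 * p - 2))
    by (rewrite Cnorm_opp, Cnorm_mul, Cnorm_pow; reflexivity).
  assert (Hf : Cnorm (Csub (f_lam p T lam u) Defs.C1)
               <= C * (Rpower (Cnorm lam) a * Rpower (Cnorm u) ((2 * INR p - 2) * a))).
  { eapply Rle_trans; [apply Csqrt_sub1_le|].
    eapply Rle_trans; [apply HC; [exact Hslit|]|].
    - rewrite Hz. apply Rmult_lt_0_compat; [exact Hlam0|apply pow_lt, Hu0].
    - rewrite Hz, Rpower_mul_pow, INR_2p_2 by lia || lra. right; reflexivity. }
  replace (1 + 1 / (2 * INR p) - 1 / (2 * INR p ^ 2)) with (1 + (2 * INR p - 2) * a)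
    by (unfold a; field; lra).
  rewrite Cnorm_g_lam, Rpower_plus, Rpower_1 by exact Hu0.
  apply (Rmult_le_compat_l (Cnorm u)) in Hf; [|lra].
  lra.
Qed.
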